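(* Let $P$ be a right LCM monoid and let $T:P\to\mathcal{B}(\mathcal{H})$ be a contractive representation satisfying the following condition: for every finite subset $F\subset P$, \[Z(F)=\sum_{U\subseteq F}(-1)^{|U|}T_{\vee U}T_{\vee U}^*\geq 0 .\] Let $F\subset P$ be a finite set and let $c_F=\max\{|U| : U\subset F,\ \vee U\neq\infty\}$. Then for every $h\in\mathcal{H}$, \[\sum_{p\in F}\|T_p^*h\|^2\leq c_F\|h\|^2.\]
   Context: A monoid $P$ is right LCM if for all $p,q\in P$, either $pP\cap qP=\emptyset$ or $pP\cap qP=rP$ for some $r\in P$. For finite $U\subset P$, write $\vee U=\infty$ if $\bigcap_{p\in U}pP=\emptyset$, and otherwise $\vee U=r$ for some $r$ with $\bigcap_{p\in U}pP=rP$; by convention $\vee\emptyset$ is the identity $e$ of $P$. A contractive representation is a unital monoid homomorphism $p\mapsto T_p$ into the contractions on a Hilbert space $\mathcal{H}$ (so $T_e=I$), and $T_{\vee U}:=0$ when $\vee U=\infty$. Here $|U|$ denotes the cardinality of $U$. *)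

From HB Require Import structures.
From mathcomp Require Import all_boot all_order all_algebra.
From mathcomp Require Import finmap.
From mathcomp Require Import complex.
From mathcomp Require Import reals.
Set Implicit Arguments. Unset Strict Implicit. Unset Printing Implicit Defensive.
Import Order.TTheory GRing.Theory Num.Theory ComplexField.
Local Open Scope ring_scope.

Definition is_monoid (P : Type) (mul : P -> P -> P) (e : P) : Prop :=
  [/\ forall p q r, mul p (mul q r) = mul (mul p q) r,
      forall p, mul e p = p &
      forall p, mul p e = p].

Definition in_rideal (P : Type) (mul : P -> P -> P) (p x : P) : Prop :=
  exists y, x = mul p y.

Definition right_LCM (P : Type) (mul : P -> P -> P) : Prop :=
  forall p q : P,
    (forall x, ~ (in_rideal mul p x /\ in_rideal mul q x)) \/
    (exists r, forall x, (in_rideal mul p x /\ in_rideal mul q x) <-> in_rideal mul r x).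

(* [join] is a choice of "∨U" for every finite U ⊆ P: None encodes ∞.
   ∨U = ∞ iff ⋂_{p∈U} pP = ∅; otherwise ∨U = r with ⋂_{p∈U} pP = rP;
   and ∨∅ = e by convention. *)
Definition is_join (P : choiceType) (mul : P -> P -> P) (e : P)
    (join : {fset P} -> option P) : Prop :=
  [/\ join fset0 = Some e,
      forall U : {fset P}, join U = None <->
        (forall x, ~ (forall p, p \in U -> in_rideal mul p x)) &
      forall (U : {fset P}) (r : P), join U = Some r ->
        forall x, (forall p, p \in U -> in_rideal mul p x) <-> in_rideal mul r x].

Definition is_inner_product (R : rcfType) (V : lmodType R[i]) (ip : V -> V -> R[i]) : Prop :=
  [/\ forall (a : R[i]) (x y z : V), ip (a *: x + y) z = a * ip x z + ip y z,
      forall x y : V, ip x y = (ip y x)^*,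
      forall x : V, 0 <= ip x x &
      forall x : V, ip x x = 0 -> x = 0].

Definition ipnorm (R : rcfType) (V : lmodType R[i]) (ip : V -> V -> R[i]) (x : V) : R :=
  Num.sqrt (complex.Re (ip x x)).

Definition ip_complete (R : rcfType) (V : lmodType R[i]) (ip : V -> V -> R[i]) : Prop :=
  forall u : nat -> V,
    (forall eps : R, 0 < eps -> exists N, forall m n, (N <= m)%N -> (N <= n)%N ->
        ipnorm ip (u m - u n) < eps) ->
    exists l : V, forall eps : R, 0 < eps -> exists N, forall n, (N <= n)%N ->
        ipnorm ip (u n - l) < eps.

Definition is_hilbert (R : rcfType) (V : lmodType R[i]) (ip : V -> V -> R[i]) : Prop :=
  is_inner_product ip /\ ip_complete ip.

Definition is_linear_op (R : rcfType) (V : lmodType R[i]) (A : V -> V) : Prop :=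
  forall (a : R[i]) (x y : V), A (a *: x + y) = a *: A x + A y.

Definition is_adjoint (R : rcfType) (V : lmodType R[i]) (ip : V -> V -> R[i])
    (A B : V -> V) : Prop :=
  forall x y : V, ip (A x) y = ip x (B y).

Definition is_contraction (R : rcfType) (V : lmodType R[i]) (ip : V -> V -> R[i])
    (A : V -> V) : Prop :=
  is_linear_op A /\ forall x, ipnorm ip (A x) <= ipnorm ip x.

Definition contractive_rep (P : Type) (mul : P -> P -> P) (e : P)
    (R : rcfType) (V : lmodType R[i]) (ip : V -> V -> R[i])
    (T Ts : P -> V -> V) : Prop :=
  [/\ forall p, is_contraction ip (T p),
      forall p, is_adjoint ip (T p) (Ts p),
      forall x, T e x = x &
      forall p q x, T (mul p q) x = T p (T q x)].

(* T_{∨U} T_{∨U}^* applied to x, with T_∞ := 0 *)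
Definition TTs (P : Type) (R : rcfType) (V : lmodType R[i]) (T Ts : P -> V -> V)
    (j : option P) (x : V) : V :=
  if j is Some r then T r (Ts r x) else 0.

Definition Zop (P : choiceType) (R : rcfType) (V : lmodType R[i]) (T Ts : P -> V -> V)
    (join : {fset P} -> option P) (F : {fset P}) (x : V) : V :=
  \sum_(U <- fpowerset F) (-1) ^+ #|` U| *: TTs T Ts (join U) x.

Definition cF (P : choiceType) (join : {fset P} -> option P) (F : {fset P}) : nat :=
  \max_(U <- fpowerset F | join U != None) #|` U|.

From HB Require Import structures.
From mathcomp Require Import all_boot all_order all_algebra.
From mathcomp Require Import finmap.
From mathcomp Require Import complex.
From mathcomp Require Import reals.
From mathcomp Require Import boolp lra.
Import Order.TTheory GRing.Theory Num.Theory ComplexField.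
Local Open Scope ring_scope.
Set Implicit Arguments. Unset Strict Implicit. Unset Printing Implicit Defensive.

(* Put a r = |T_r^* h|^2; it only depends on the right ideal rP, and a(\/U) := 0 when
   \/U = oo.  Moebius inversion over the subsets of F writes a(\/W) = sum_{W <= X <= F} beta X,
   so c_F a(e) - sum_{p in F} a(p) = sum_X beta X (c_F - |X|).  If beta X <> 0 then X contains
   every p in F dividing \/X and \/X <> oo, so |X| <= c_F.  Writing c_F - |X| as
   #{m < c_F | |X| <= m}, the difference becomes sum_{m < c_F} <Z(G_(m+1)) h, h>, where
   G_k = {\/U | U <= F, |U| >= k, \/U <> oo}: for such an X the alternating sum over the
   subsets of G_k of a(\/V) picks out exactly beta X [|X| < k]. *)

Section AlternatingSums.
Local Open Scope fset_scope.
Variable K : choiceType.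
Implicit Types (A G H : {fset K}).

Lemma big_fpowersetU1 (M : nmodType) (a : K) A (f : {fset K} -> M) : a \notin A ->
  \sum_(V <- fpowerset (a |` A)) f V = \sum_(V <- fpowerset A) (f V + f (a |` V)).
Proof.
move=> aA; rewrite (big_fsetID _ (fun V : {fset K} => a \notin V)) big_split /=.
congr (_ + _)%R.
  apply: eq_fbigl => V; rewrite !inE /= !fpowersetE.
  apply/andP/idP => [[/fsubsetP VaA aV]|/fsubsetP VA].
    apply/fsubsetP => x xV; move: (VaA x xV); rewrite !inE.
    by case: eqP => // ex; rewrite -ex xV in aV.
  split; first by apply/fsubsetP => x /VA xA; rewrite !inE xA orbT.
  by apply: contra aA => /VA.
have -> : [fset V in fpowerset (a |` A) | ~~ (a \notin (V : {fset K}))]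
    = [fset a |` V | V in fpowerset A].
  apply/fsetP => V; rewrite !inE /= fpowersetE negbK.
  apply/andP/imfsetP => [[/fsubsetP VaA aV]|[W /= WA ->]].
    exists (V `\ a) => /=; last by apply/fsetP => x; rewrite !inE; case: eqP => // ->.
    rewrite fpowersetE; apply/fsubsetP => x; rewrite !inE => /andP[xa /VaA].
    by rewrite !inE (negbTE xa).
  by rewrite fset1U1 fsetUS -?fpowersetE.
rewrite big_imfset //= => V W; rewrite /= !fpowersetE => /fsubsetP VA /fsubsetP WA VW.
apply/fsetP => x; move/fsetP/(_ x): VW; rewrite !inE.
by case: eqP => [->|//] _; rewrite !(contraNF (VA _)) ?(contraNF (WA _)).
Qed.

Lemma alt_sum_fpowerset_eq0 (R : ringType) G (g : K) (f : {fset K} -> R) : g \in G ->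
  (forall V, V `<=` G `\ g -> f (g |` V) = f V) ->
  \sum_(V <- fpowerset G) (-1) ^+ #|` V| * f V = 0.
Proof.
move=> gG fgV; rewrite -(fsetD1K gG) big_fpowersetU1 ?fsetD11 //.
rewrite big_seq big1 // => V; rewrite fpowersetE => VG.
have gV : g \notin V by apply/negP => /(fsubsetP VG); rewrite fsetD11.
by rewrite fgV // cardfsU1 gV exprS mulN1r mulNr addrN.
Qed.

Lemma alt_sum_fpowerset_all (R : ringType) G (Q : pred K) :
  \sum_(V <- fpowerset G) (-1) ^+ #|` V| * ((all Q V)%:R : R) = (~~ has Q G)%:R.
Proof.
have [/hasP[g gG Qg]|noQ] := boolP (has Q G).
  apply: alt_sum_fpowerset_eq0 gG _ => V _; congr (nat_of_bool _)%:R.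
  apply/allP/allP => QV x xV; first by apply: QV; rewrite !inE xV orbT.
  by move: xV; rewrite !inE => /orP[/eqP -> // | /QV].
rewrite (big_fsetD1 fset0) ?fpowersetE ?fsub0set //= expr0 mul1r.
rewrite big_seq big1 ?addr0 // => V; rewrite !inE fpowersetE => /andP[V0 VG].
have [x xV] := fset0Pn V V0; case: (boolP (all Q V)) => [/allP QV|]; last by rewrite mulr0.
by case/hasP: noQ; exists x; [apply: (fsubsetP VG) | apply: QV].
Qed.

Lemma fpowerset_mobius (R : ringType) H (g : {fset K} -> R) :
  \sum_(X <- fpowerset H) \sum_(Y <- fpowerset (H `\` X)) (-1) ^+ #|` Y| * g (X `|` Y)
  = g fset0.
Proof.
elim/fset1U_rect: H => [|a H aH IH].
  by rewrite fpowerset0 !big_seq_fset1 fset0D fpowerset0 big_seq_fset1 expr0 mul1r fsetU0.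
rewrite big_fpowersetU1 // -IH !big_seq; apply: eq_bigr => X; rewrite fpowersetE => XH.
have aX : a \notin X by apply: contra aH => /(fsubsetP XH).
have -> : (a |` H) `\` X = a |` (H `\` X).
  by apply/fsetP => z; rewrite !inE; case: eqP => // ->; rewrite (negbTE aX).
have -> : (a |` H) `\` (a |` X) = H `\` X.
  by apply/fsetP => z; rewrite !inE; case: eqP => [->|]; rewrite ?(negbTE aH) ?andbF.
rewrite big_fpowersetU1 ?inE ?(negbTE aH) ?andbF // big_split /= -addrA -big_split /=.
rewrite [X in (_ + X)%R]big_seq [X in (_ + X)%R]big1 ?addr0 // => Y; rewrite fpowersetE => YH.
have aY : a \notin Y by apply: contra aH => /(fsubsetP YH); rewrite !inE => /andP[].
have -> : X `|` (a |` Y) = (a |` X) `|` Y by rewrite fsetUCA fsetUA.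
by rewrite cardfsU1 aY exprS mulN1r mulNr addNr.
Qed.

End AlternatingSums.

Lemma sum_ord_geq (k c : nat) : (\sum_(m < c) (k <= m)%N = c - k)%N.
Proof.
rewrite -[(c - k)%N]muln1 -sum_nat_const_nat big_geq_mkord [RHS]big_mkcond.
by apply: eq_bigr => m _; case: leqP.
Qed.

Section JoinMobius.
Local Open Scope fset_scope.
Variables (P : choiceType) (mul : P -> P -> P) (e : P) (join : {fset P} -> option P).
Hypothesis join_spec : is_join mul e join.
Variables (R : numDomainType) (a : P -> R).
Hypothesis a_rideal :
  forall r r', (forall x, in_rideal mul r x <-> in_rideal mul r' x) -> a r = a r'.

Definition common_multiple (U : {fset P}) (x : P) := forall p, p \in U -> in_rideal mul p x.

Definition divides_lcm (U : {fset P}) (p : P) :=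
  forall x, common_multiple U x -> in_rideal mul p x.

Definition a_join (U : {fset P}) : R := if join U is Some r then a r else 0.

Lemma join_Some U r :
  join U = Some r -> forall x, common_multiple U x <-> in_rideal mul r x.
Proof. by case: join_spec => _ _; apply. Qed.

Lemma join_None U : join U = None <-> forall x, ~ common_multiple U x.
Proof. by case: join_spec => _ + _; apply. Qed.

Lemma eq_a_join U U' :
  (forall x, common_multiple U x <-> common_multiple U' x) -> a_join U = a_join U'.
Proof.
rewrite /a_join => UU'.
case jU: (join U) => [r|]; case jU': (join U') => [r'|] //.
- by apply: a_rideal => x; rewrite -(join_Some jU) -(join_Some jU'); apply: UU'.
- by move/join_None: jU' => /(_ (mul r e)); case; apply/UU'/(join_Some jU); exists e.
- by move/join_None: jU => /(_ (mul r' e)); case; apply/UU'/(join_Some jU'); exists e.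
Qed.

Lemma a_join0 : a_join fset0 = a e.
Proof. by case: join_spec => je _ _; rewrite /a_join je. Qed.

Lemma a_join1 p : a_join [fset p] = a p.
Proof.
have common_p x : common_multiple [fset p] x <-> in_rideal mul p x.
  by split => [|px q]; [apply; rewrite inE | rewrite inE => /eqP ->].
rewrite /a_join; case jp: (join [fset p]) => [r|].
  by apply: a_rideal => x; rewrite -(join_Some jp).
by move/join_None: jp => /(_ (mul p e)); case; apply/common_p; exists e.
Qed.

Lemma a_join_eq0 U : (forall x, ~ common_multiple U x) -> a_join U = 0.
Proof. by move=> /join_None jU; rewrite /a_join jU. Qed.

Variable F : {fset P}.

Definition beta (X : {fset P}) : R :=
  \sum_(Y <- fpowerset (F `\` X)) (-1) ^+ #|` Y| * a_join (X `|` Y).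

Lemma a_join_mobius W :
  W `<=` F -> a_join W = \sum_(X <- fpowerset F | W `<=` X) beta X.
Proof.
move=> WF; rewrite -{1}(fsetU0 W) -(fpowerset_mobius (F `\` W) (fun Y => a_join (W `|` Y))).
rewrite [RHS]big_fset_condE.
have -> : [fset X in fpowerset F | W `<=` X] = [fset W `|` X | X in fpowerset (F `\` W)].
  apply/fsetP => X; rewrite !inE /= fpowersetE.
  apply/andP/imfsetP => [[XF WX]|[Y /= YFW ->]].
    exists (X `\` W) => /=; first by rewrite fpowersetE fsetSD.
    by rewrite fsetUDl fsetDv fsetD0; apply/esym/fsetUidPr.
  rewrite fsubsetUl fsubUset WF; split => //.
  by move: YFW; rewrite fpowersetE => /fsubset_trans; apply; apply: fsubsetDl.
rewrite [RHS](big_imfset _ _ beta) /=; last first.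
  move=> Y1 Y2; rewrite /= !fpowersetE => /fsubsetP Y1F /fsubsetP Y2F Y12.
  apply/fsetP => z; move/fsetP/(_ z): Y12; rewrite !inE.
  have [zW _|//] := boolP (z \in W).
  by apply/idP/idP => [/Y1F|/Y2F]; rewrite !inE zW.
apply: eq_bigr => Y _; rewrite /beta fsetDDl.
by apply: eq_bigr => Z _; rewrite fsetUA.
Qed.

Lemma beta_eq0_divides_lcm X p :
  p \in F -> p \notin X -> divides_lcm X p -> beta X = 0.
Proof.
move=> pF pX pXlcm; apply: (alt_sum_fpowerset_eq0 (g := p)); first by rewrite !inE pX.
move=> Y _; apply: eq_a_join => x; split => Xx q; rewrite !inE => qXY.
  by apply: Xx; rewrite !inE; case/orP: qXY => ->; rewrite ?orbT.
case/orP: qXY => [qX|/orP[/eqP ->|qY]]; last by apply: Xx; rewrite !inE qY !orbT.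
  by apply: Xx; rewrite !inE qX.
by apply: pXlcm => r rX; apply: Xx; rewrite !inE rX.
Qed.

Lemma beta_eq0_no_common X : (forall x, ~ common_multiple X x) -> beta X = 0.
Proof.
move=> noX; rewrite /beta big1 // => Y _; rewrite a_join_eq0 ?mulr0 // => x XYx.
by apply: (noX x) => q qX; apply: XYx; rewrite inE qX.
Qed.

Lemma card_le_cF X : X `<=` F -> beta X != 0 -> (#|` X| <= cF join F)%N.
Proof.
move=> XF; apply: contraNT; rewrite -ltnNge => cF_lt.
apply/eqP/beta_eq0_no_common => x Xx.
have jX : join X != None by apply/eqP => /join_None /(_ x Xx).
by move: cF_lt; rewrite ltnNge (@leq_bigmax_seq _ _ _ _ X) ?fpowersetE.
Qed.

Definition joins_ge (m : nat) : {fset P} :=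
  [fset odflt e (join U)
     | U in [fset U in fpowerset F | (m <= #|` U|)%N && (join U != None)]].

Lemma joins_geP m g :
  g \in joins_ge m <-> exists U, [/\ U `<=` F, (m <= #|` U|)%N & join U = Some g].
Proof.
split => [/imfsetP[U /=] | [U [UF mU jU]]].
  rewrite !inE fpowersetE => /andP[UF /andP[mU jU]] ->.
  by exists U; split => //; case: (join U) jU.
apply/imfsetP; exists U; last by rewrite /= jU.
by rewrite !inE fpowersetE UF mU jU.
Qed.

Definition lcm_divisors (V : {fset P}) : {fset P} :=
  [fset p in F | `[< divides_lcm V p >]].

Lemma lcm_divisors_sub V : lcm_divisors V `<=` F.
Proof. by apply/fsubsetP => p; rewrite !inE => /andP[]. Qed.

Lemma sub_lcm_divisors V g U :
  g \in V -> join U = Some g -> U `<=` F -> U `<=` lcm_divisors V.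
Proof.
move=> gV jU UF; apply/fsubsetP => q qU; rewrite !inE (fsubsetP UF q qU) /=.
by apply/asboolP => x Vx; apply: (join_Some jU x).2 (Vx g gV) q qU.
Qed.

Lemma a_join_lcm_divisors m V :
  V `<=` joins_ge m -> a_join V = a_join (lcm_divisors V).
Proof.
move=> Vm; apply: eq_a_join => x; split => [Vx q | Lx g gV].
  by rewrite !inE => /andP[_ /asboolP]; apply.
have [U [UF _ jU]] := (joins_geP m g).1 (fsubsetP Vm g gV).
apply/(join_Some jU) => q qU; apply: Lx.
exact: fsubsetP (sub_lcm_divisors gV jU UF) q qU.
Qed.

Lemma alt_sum_lcm_divisors_sub m X : X `<=` F -> beta X != 0 ->
  \sum_(V <- fpowerset (joins_ge m)) (-1) ^+ #|` V| * ((lcm_divisors V `<=` X)%:R : R)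
  = (#|` X| < m)%:R.
Proof.
move=> XF bX.
have X_closed p : p \in F -> divides_lcm X p -> p \in X.
  move=> pF pX; apply: contraTT bX => pNX.
  by rewrite (beta_eq0_divides_lcm pF pNX pX) eqxx.
transitivity (\sum_(V <- fpowerset (joins_ge m))
    (-1) ^+ #|` V| * ((all (fun g => `[< divides_lcm X g >]) V)%:R : R)).
  rewrite !big_seq; apply: eq_bigr => V; rewrite fpowersetE => Vm.
  congr (_ * (nat_of_bool _)%:R); apply/fsubsetP/allP => [LX g gV | XV p].
    apply/asboolP => x Xx; have [U [UF _ jU]] := (joins_geP m g).1 (fsubsetP Vm g gV).
    apply/(join_Some jU) => q qU; apply: Xx; apply: LX.
    exact: fsubsetP (sub_lcm_divisors gV jU UF) q qU.
  rewrite !inE => /andP[pF /asboolP pV]; apply: X_closed pF _ => x Xx.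
  by apply: pV => g gV; move/asboolP: (XV g gV); apply.
rewrite alt_sum_fpowerset_all ltnNge; congr (nat_of_bool (~~ _))%:R.
apply/hasP/idP => [[g gm /asboolP gX] | mX].
  have [U [UF mU jU]] := (joins_geP m g).1 gm.
  apply: leq_trans mU (fsubset_leq_card _); apply/fsubsetP => q qU.
  apply: X_closed (fsubsetP UF q qU) _ => x Xx.
  exact: (join_Some jU x).2 (gX x Xx) q qU.
case jX: (join X) => [r|]; last by move: bX; rewrite beta_eq0_no_common ?eqxx // -join_None.
exists r; first by apply/joins_geP; exists X.
by apply/asboolP => x /(join_Some jX).
Qed.

Lemma alt_sum_joins_ge m :
  \sum_(V <- fpowerset (joins_ge m)) (-1) ^+ #|` V| * a_join V
  = \sum_(X <- fpowerset F) beta X * (#|` X| < m)%:R.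
Proof.
transitivity (\sum_(V <- fpowerset (joins_ge m)) \sum_(X <- fpowerset F)
    (-1) ^+ #|` V| * (beta X * (lcm_divisors V `<=` X)%:R)).
  rewrite !big_seq; apply: eq_bigr => V; rewrite fpowersetE => Vm.
  rewrite (a_join_lcm_divisors Vm) (a_join_mobius (lcm_divisors_sub V)).
  rewrite big_mkcond mulr_sumr; apply: eq_bigr => X _.
  by case: (_ `<=` _); rewrite ?mulr1 ?mulr0.
rewrite exchange_big !big_seq; apply: eq_bigr => X; rewrite fpowersetE => XF.
have [->|bX] := eqVneq (beta X) 0.
  by rewrite mul0r big1 // => V _; rewrite mul0r mulr0.
rewrite -(alt_sum_lcm_divisors_sub m XF bX) mulr_sumr.
by apply: eq_bigr => V _; rewrite mulrCA.
Qed.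

Lemma a_unit_mobius : a e = \sum_(X <- fpowerset F) beta X.
Proof.
by rewrite -a_join0 (a_join_mobius (fsub0set F)); apply: eq_bigl => X; rewrite fsub0set.
Qed.

Lemma sum_a_mobius : \sum_(p <- F) a p = \sum_(X <- fpowerset F) beta X * #|` X|%:R.
Proof.
transitivity (\sum_(p <- F) \sum_(X <- fpowerset F) beta X * (p \in X)%:R).
  rewrite !big_seq; apply: eq_bigr => p pF.
  rewrite -a_join1 a_join_mobius ?fsub1set // big_mkcond; apply: eq_bigr => X _.
  by rewrite fsub1set; case: (p \in X); rewrite ?mulr1 ?mulr0.
rewrite exchange_big !big_seq; apply: eq_bigr => X; rewrite fpowersetE => XF.
rewrite -mulr_sumr -natr_sum card_fset_sum1 -(big_fset_incl _ XF); last first.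
  by move=> x _ /negbTE ->.
by rewrite !big_seq; congr (_ * _%:R); apply: eq_bigr => x ->.
Qed.

Hypothesis Z_ge0 :
  forall G : {fset P}, 0 <= \sum_(U <- fpowerset G) (-1) ^+ #|` U| * a_join U.

Lemma sum_le_cF_mul_unit : \sum_(p <- F) a p <= (cF join F)%:R * a e.
Proof.
rewrite sum_a_mobius a_unit_mobius -subr_ge0 mulr_sumr -sumrB.
have -> : \sum_(X <- fpowerset F) ((cF join F)%:R * beta X - beta X * #|` X|%:R)
    = \sum_(m < cF join F) \sum_(X <- fpowerset F) beta X * (#|` X| < m.+1)%:R.
  rewrite exchange_big !big_seq; apply: eq_bigr => X; rewrite fpowersetE => XF.
  have [->|bX] := eqVneq (beta X) 0.
    by rewrite mulr0 mul0r subr0 big1 // => m _; rewrite mul0r.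
  rewrite -mulr_sumr -natr_sum sum_ord_geq natrB ?card_le_cF //.
  by rewrite mulrBr mulrC.
by apply: sumr_ge0 => m _; rewrite -alt_sum_joins_ge.
Qed.

End JoinMobius.

Lemma Re_ge0 (R : rcfType) (z : R[i]) : 0 <= z -> 0 <= complex.Re z.
Proof. by rewrite lecE => /andP[]. Qed.

Lemma Re_signM (R : rcfType) (k : nat) (z : R[i]) :
  complex.Re ((-1) ^+ k * z) = (-1) ^+ k * complex.Re z.
Proof.
by rewrite -[in LHS]signr_odd -[in RHS]signr_odd !mulr_sign; case: (odd k); case: z.
Qed.

Lemma Re_conj (R : rcfType) (z : R[i]) : complex.Re z^* = complex.Re z.
Proof. by case: z. Qed.

Section InnerProduct.
Variables (R : rcfType) (V : lmodType R[i]) (ip : V -> V -> R[i]).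
Hypothesis ip_spec : is_inner_product ip.

Lemma ipDl x y z : ip (x + y) z = ip x z + ip y z.
Proof. by case: ip_spec => lin _ _ _; rewrite -{1}[x]scale1r lin mul1r. Qed.

Lemma ip0l z : ip 0 z = 0.
Proof. by apply: (@addrI _ (ip 0 z)); rewrite -ipDl !addr0. Qed.

Lemma ipZl c x z : ip (c *: x) z = c * ip x z.
Proof. by case: ip_spec => lin _ _ _; rewrite -[c *: x]addr0 lin ip0l addr0. Qed.

Lemma ipNl x z : ip (- x) z = - ip x z.
Proof. by rewrite -scaleN1r ipZl mulN1r. Qed.

Lemma ipDr x y z : ip z (x + y) = ip z x + ip z y.
Proof.
by case: ip_spec => _ sym _ _; rewrite sym ipDl (sym z x) (sym z y); apply: rmorphD.
Qed.

Lemma ipNr x z : ip z (- x) = - ip z x.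
Proof. by case: ip_spec => _ sym _ _; rewrite sym ipNl (sym z x); apply: rmorphN. Qed.

Lemma ipnorm_ge0 x : 0 <= ipnorm ip x.
Proof. exact: sqrtr_ge0. Qed.

Lemma sqr_ipnorm x : ipnorm ip x ^+ 2 = complex.Re (ip x x).
Proof. by case: ip_spec => _ _ pos _; rewrite sqr_sqrtr // Re_ge0. Qed.

Lemma ipnorm_eq y1 y2 : (forall x, ip x y1 = ip x y2) -> ipnorm ip y1 = ipnorm ip y2.
Proof. by case: ip_spec => _ sym _ _ eq12; rewrite /ipnorm eq12 sym eq12 Re_conj. Qed.

(* With s = B y one has <A s, y> = <s, s>, hence
   0 <= |A s - y|^2 = |A s|^2 - 2|s|^2 + |y|^2 <= |y|^2 - |s|^2. *)
Lemma sqr_ipnorm_adjoint_le (A B : V -> V) :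
  is_contraction ip A -> is_adjoint ip A B ->
  forall y, ipnorm ip (B y) ^+ 2 <= ipnorm ip y ^+ 2.
Proof.
move=> [_ A_le] adj y; set s := B y.
have As_le : ipnorm ip (A s) ^+ 2 <= ipnorm ip s ^+ 2.
  by rewrite ler_sqr ?nnegrE ?ipnorm_ge0.
have expand : ipnorm ip (A s - y) ^+ 2
    = ipnorm ip (A s) ^+ 2 - 2 * ipnorm ip s ^+ 2 + ipnorm ip y ^+ 2.
  case: ip_spec => _ sym _ _.
  have Re_sym : complex.Re (ip y (A s)) = complex.Re (ip s s) by rewrite sym Re_conj adj.
  rewrite !sqr_ipnorm ipDl ipNl !ipDr !ipNr [ip (A s) y]adj -/s; move: Re_sym.
  by case: (ip (A s) (A s)) (ip s s) (ip y (A s)) (ip y y) => [? ?] [? ?] [? ?] [? ?] /=; lra.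
by have := sqr_ge0 (ipnorm ip (A s - y)); rewrite expand; lra.
Qed.

End InnerProduct.

Section ContractiveRepresentation.
Variables (P : choiceType) (mul : P -> P -> P) (e : P).
Variables (R : rcfType) (V : lmodType R[i]) (ip : V -> V -> R[i]) (T Ts : P -> V -> V).
Hypotheses (ip_spec : is_inner_product ip) (monoid_spec : is_monoid mul e).
Hypothesis rep : contractive_rep mul e ip T Ts.

Definition adj_sqnorm (h : V) (r : P) : R := ipnorm ip (Ts r h) ^+ 2.

Lemma adj_sqnorm_unit h : adj_sqnorm h e = ipnorm ip h ^+ 2.
Proof.
case: rep => _ adj Te _; congr (_ ^+ 2).
by apply: ipnorm_eq => // x; rewrite -adj Te.
Qed.

Lemma adj_sqnorm_rideal h r r' : in_rideal mul r' r -> adj_sqnorm h r <= adj_sqnorm h r'.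
Proof.
case: rep => contr adj _ Tmul [u ->].
have -> : adj_sqnorm h (mul r' u) = ipnorm ip (Ts u (Ts r' h)) ^+ 2.
  by congr (_ ^+ 2); apply: ipnorm_eq => // x; rewrite -!adj Tmul.
exact: sqr_ipnorm_adjoint_le.
Qed.

Lemma eq_adj_sqnorm h r r' :
  (forall x, in_rideal mul r x <-> in_rideal mul r' x) -> adj_sqnorm h r = adj_sqnorm h r'.
Proof.
case: monoid_spec => _ _ mulr1 rr'; have self q : in_rideal mul q q by exists e; rewrite mulr1.
by apply/le_anti; rewrite !adj_sqnorm_rideal //; [apply/rr' | apply/rr'].
Qed.

Lemma Re_Zop join G h :
  complex.Re (ip (Zop T Ts join G h) h)
  = \sum_(U <- fpowerset G) (-1) ^+ #|` U| * a_join join (adj_sqnorm h) U.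
Proof.
case: rep => _ adj _ _.
rewrite /Zop (big_morph (ip^~ h) (fun x y => ipDl ip_spec x y h) (ip0l ip_spec h)).
rewrite (raddf_sum (@complex.Re R : Rcomplex R -> R)) /=.
apply: eq_bigr => U _; rewrite ipZl // Re_signM; congr (_ * _).
rewrite /a_join /TTs; case: (join U) => [r|]; last by rewrite ip0l.
by rewrite adj -sqr_ipnorm.
Qed.

End ContractiveRepresentation.

Theorem lemma4p1
  (P : choiceType) (mul : P -> P -> P) (e : P)
  (R : realType) (V : lmodType R[i]) (ip : V -> V -> R[i])
  (T Ts : P -> V -> V) (join : {fset P} -> option P) :
  is_monoid mul e ->
  right_LCM mul ->
  is_join mul e join ->
  is_hilbert ip ->
  contractive_rep mul e ip T Ts ->
  (forall (G : {fset P}) (x : V), 0 <= ip (Zop T Ts join G x) x) ->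
  forall (F : {fset P}) (h : V),
    \sum_(p <- F) ipnorm ip (Ts p h) ^+ 2 <= (cF join F)%:R * ipnorm ip h ^+ 2.
Proof.
move=> monoid _ join_spec [ip_spec _] rep Z_ge0 F h.
rewrite -(adj_sqnorm_unit ip_spec rep).
apply: (sum_le_cF_mul_unit join_spec (eq_adj_sqnorm ip_spec monoid rep h)) => G.
by rewrite -(Re_Zop ip_spec rep); apply: Re_ge0.
Qed.
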